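(* Let $K$ be a finite field, $G$ a finite group and $\ell\ge1$. There exists a self-dual quasi-$G$ code over $K$ of index $\ell$ (i.e. a right $KG$-submodule $\mathcal{C}\le KG^\ell$ with $\mathcal{C}=\mathcal{C}^\perp$) if and only if one of the following holds: (i) $|K|\equiv1\pmod 4$ and $2\mid\ell$; (ii) $|K|\equiv3\pmod 4$ and $4\mid\ell$; (iii) $|K|$ is even and ($2\mid\ell$ or $2\mid|G|$).
   Context: Fix an ordering $g_1,\ldots,g_n$ of $G$ and let $\varphi:KG\to K^n$, $\sum_i a_ig_i\mapsto(a_1,\ldots,a_n)$. On $KG^\ell=KG\oplus\cdots\oplus KG$ ($\ell$ copies) define the Euclidean bilinear form $\langle (a_1,\ldots,a_\ell),(b_1,\ldots,b_\ell)\rangle=\sum_{i=1}^\ell\varphi(a_i)\cdot\varphi(b_i)$, where $\cdot$ is the standard inner product on $K^n$. For a right $KG$-submodule $\mathcal{C}\le KG^\ell$ (a quasi-$G$ code of index $\ell$), $\mathcal{C}^\perp=\{v\in KG^\ell:\langle v,c\rangle=0\ \text{for all } c\in\mathcal{C}\}$, and $\mathcal{C}$ is self-dual if $\mathcal{C}=\mathcal{C}^\perp$. *)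

From HB Require Import structures.
From mathcomp Require Import all_boot all_order all_algebra all_fingroup.
Set Implicit Arguments. Unset Strict Implicit. Unset Printing Implicit Defensive.
Import GRing.Theory.
Local Open Scope ring_scope.

(* The group algebra KG, as coefficient functions G -> K
   (the finite group G is the whole carrier of gT). *)
Definition grpalg (K : finFieldType) (gT : finGroupType) := {ffun gT -> K}.

Definition qvec (K : finFieldType) (gT : finGroupType) (l : nat) :=
  {ffun 'I_l -> {ffun gT -> K}}.

(* Product in KG:  (sum_g a_g g)(sum_h b_h h) has coefficient
   sum_g a_g b_{g^-1 k} at k. *)
Definition ga_mul (K : finFieldType) (gT : finGroupType)
    (a b : {ffun gT -> K}) : {ffun gT -> K} :=
  [ffun k => \sum_(g : gT) a g * b ((g^-1 * k)%g)].

Definition qrmul (K : finFieldType) (gT : finGroupType) (l : nat)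
    (x : qvec K gT l) (r : {ffun gT -> K}) : qvec K gT l :=
  [ffun i => ga_mul (x i) r].

Definition is_quasiG_code (K : finFieldType) (gT : finGroupType) (l : nat)
    (C : {set qvec K gT l}) : Prop :=
  [/\ (0 : qvec K gT l) \in C,
      (forall x y, x \in C -> y \in C -> x + y \in C) &
      (forall x (r : {ffun gT -> K}), x \in C -> qrmul x r \in C)].

Definition qform (K : finFieldType) (gT : finGroupType) (l : nat)
    (a b : qvec K gT l) : K :=
  \sum_(i < l) \sum_(g : gT) a i g * b i g.

Definition qdual (K : finFieldType) (gT : finGroupType) (l : nat)
    (C : {set qvec K gT l}) : {set qvec K gT l} :=
  [set v | [forall c in C, qform v c == 0]].

Definition self_dual (K : finFieldType) (gT : finGroupType) (l : nat)
    (C : {set qvec K gT l}) : Prop := C = qdual C.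

(* Let H be a subgroup of G whose order is invertible in K: a
   Sylow 2-subgroup when |K| is odd, the trivial subgroup when |G| is odd.
   Vectors of KG^l that are constant on the left cosets gH form a copy of
   K^(l [G:H]) on which the form is |H| times the standard one, and
   right multiplication by the sum of the elements of H maps a self-dual code
   C into such vectors; so C yields a self-dual subspace of K^(l [G:H]).  A
   self-dual subspace of K^n has dimension d with n = 2d, and comparing the
   determinants of U and of its Gram matrix, for U invertible with the
   subspace as its first d rows, shows that (-1)^d is a square.  As [G:H] is
   odd, 2 divides l, and 4 divides l when |K| = 3 mod 4.
   Sufficiency.  If N N^T = -1, the row space of [1 | N] is self-dual and its
   tensor product with KG is a self-dual quasi-G code; take N = i with
   i^2 = -1 (i = 1 in characteristic 2), or N = [[a, -b], [b, a]] with
   a^2 + b^2 = -1, which is solvable in every finite field.  In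
   characteristic 2, an involution t of G gives the self-dual code of vectors
   invariant under left multiplication by t, in any index. *)

From HB Require Import structures.
From mathcomp Require Import all_boot all_order all_algebra all_fingroup.
From mathcomp Require Import pgroup sylow finfield zify.
Set Implicit Arguments. Unset Strict Implicit. Unset Printing Implicit Defensive.
Import GRing.Theory.
Local Open Scope ring_scope.

Section FiniteFieldSquares.
Variable K : finFieldType.

Lemma odd_card_finField : odd #|K| = (2%:R != 0 :> K).
Proof.
have [p p_pr pcharKp] := finPcharP K.
have [n cardK] : exists n, #|K| = (p ^ n.+1)%N.
  have := finNzRing_gt1 K; rewrite (card_pprimeChar pcharKp).
  by case: (logn _ _) => [|n] //; exists n.
rewrite cardK oddX -(dvdn_pcharf pcharKp) dvdn_prime2 //.
case: (even_prime p_pr) => [->|p_odd] //=.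
by rewrite p_odd; apply/esym; apply: contraTneq p_odd => ->.
Qed.

Lemma sqr_neqN1 : (#|K| %% 4 = 3)%N -> forall x : K, x ^+ 2 != -1.
Proof.
move=> cardK3 x; apply/eqP=> x2N1.
have two_neq0 : (2%:R : K) != 0.
  by rewrite -odd_card_finField -(odd_mod _ (erefl : odd 4 = false)) cardK3.
have x4 : x ^+ 4 = 1 by rewrite (exprM x 2 2) x2N1 sqrrN expr1n.
have : x ^+ 3 = x.
  rewrite -[RHS](expf_card x) (divn_eq #|K| 4) cardK3 exprD.
  by rewrite mulnC exprM x4 expr1n mul1r.
rewrite exprS x2N1 mulrN1 => /eqP; rewrite eq_sym -addr_eq0 -mulr2n -mulr_natl.
rewrite mulf_eq0 (negbTE two_neq0) /= => /eqP x0.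
by move: x2N1; rewrite x0 expr0n /= => /eqP; rewrite eq_sym oppr_eq0 oner_eq0.
Qed.

Lemma sqrN1_exists : (#|K| %% 4 = 1)%N -> exists i : K, i ^+ 2 = -1.
Proof.
move=> cardK1; set k := (#|K| %/ 4)%N.
have cardK : #|K| = (4 * k).+1 by rewrite {1}(divn_eq #|K| 4) cardK1 addn1 mulnC.
have k_gt0 : (0 < k)%N by have := finNzRing_gt1 K; rewrite cardK; lia.
(* The 2k roots of X^(2k) - 1 cannot exhaust the 4k nonzero elements. *)
have [x x_neq0 xk_neq1] : exists2 x : K, x != 0 & x ^+ k.*2 != 1.
  apply/exists_inP; apply: contraT; rewrite negb_exists_in => /forall_inP allx.
  have roots : all (root ('X^(k.*2) - 1)) (enum [set~ (0 : K)]).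
    apply/allP => x; rewrite mem_enum !inE => x_neq0.
    by have := allx x x_neq0; rewrite negbK /root !hornerE subr_eq0.
  have := max_poly_roots _ roots (enum_uniq _).
  rewrite -size_poly_eq0 size_XnsubC ?double_gt0 // -cardE cardsC1 cardK.
  by move/(_ isT); lia.
have x4k : x ^+ k.*2 ^+ 2 = 1.
  apply: (mulIf x_neq0); rewrite mul1r -exprM -exprSr.
  by rewrite (_ : (k.*2 * 2).+1 = #|K|) ?expf_card // cardK; lia.
exists (x ^+ k); rewrite -exprM muln2; apply/eqP; rewrite -addr_eq0.
have : (x ^+ k.*2 - 1) * (x ^+ k.*2 + 1) = 0 by rewrite -subr_sqr x4k expr1n subrr.
by move/eqP; rewrite mulf_eq0 subr_eq0 (negbTE xk_neq1).
Qed.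

Lemma card_lt_double_card_sqr : (#|K| < (#|[set x ^+ 2 | x : K]|).*2)%N.
Proof.
set Sq := [set x ^+ 2 | x : K].
have Sq0 : 0 \in Sq by apply/imsetP; exists 0; rewrite ?expr0n.
have fiber_le2 s : s \in Sq -> (\sum_(x | x ^+ 2 == s) 1 <= 2)%N.
  case/imsetP => r _ ->; rewrite sum1_card.
  apply: leq_trans (subset_leq_card (_ : _ \subset [set r; - r])) _.
    by apply/subsetP => x /= x2; rewrite !inE -eqf_sqr.
  by rewrite cards2 ltnS leq_b1.
rewrite -[X in (X < _)%N]sum1_card.
rewrite (partition_big (fun x => x ^+ 2) (mem Sq)) => [|x _]; last exact: imset_f.
rewrite (bigD1 0) //=.
have -> : (\sum_(x : K | x ^+ 2 == 0%R) 1 = 1)%N.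
  by rewrite (eq_bigl (pred1 0)) ?big_pred1_eq // => x; rewrite /= expf_eq0.
apply: (@leq_trans (1 + \sum_(s in Sq | s != 0%R) 2).+1).
  by rewrite ltnS leq_add2l; apply: leq_sum => s /andP[/fiber_le2].
rewrite sum_nat_const (cardD1 0%R Sq) Sq0 (eq_card (B := [predD1 Sq & 0%R])).
  by rewrite /= add1n doubleS muln2.
by move=> s; rewrite !inE andbC.
Qed.

Lemma sum_sqr_eqN1 : exists a b : K, a ^+ 2 + b ^+ 2 = -1.
Proof.
(* Both sets below fill more than half of K, so they meet. *)
set Sq := [set x ^+ 2 | x : K]; set Sq' := [set -1 - s | s in Sq].
have [s] : exists s, s \in Sq :&: Sq'.
  apply/set0Pn; rewrite -card_gt0.
  have cardSq' : #|Sq'| = #|Sq| by apply/card_imset/subrI.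
  rewrite -(ltn_add2l #|Sq :|: Sq'|) addn0 cardsUI cardSq' addnn.
  exact: leq_ltn_trans (max_card _) card_lt_double_card_sqr.
rewrite inE => /andP[/imsetP[a _ ->] /imsetP[_ /imsetP[b _ ->] sumab]].
by exists a, b; rewrite sumab subrK.
Qed.
End FiniteFieldSquares.

Section SelfDualMatrix.
Variable K : fieldType.

Definition self_dual_mx m n (A : 'M[K]_(m, n)) := (kermx A^T == A)%MS.

Lemma self_dual_mx_sub m n (A : 'M[K]_(m, n)) (u : 'rV_n) :
  self_dual_mx A -> (u <= A)%MS = (u *m A^T == 0).
Proof. by move/eqmxP => kerA; rewrite -sub_kermx kerA. Qed.

Lemma self_dual_mx_orth m n (A : 'M[K]_(m, n)) (u w : 'rV_n) :
  self_dual_mx A -> (u <= A)%MS -> (w <= A)%MS -> u *m w^T = 0.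
Proof.
move=> sdA; rewrite self_dual_mx_sub // => /eqP uA /submxP[z ->].
by rewrite trmx_mul mulmxA uA mul0mx.
Qed.

Lemma self_dual_mx_mul_tr m n (A : 'M[K]_(m, n)) :
  self_dual_mx A -> A *m A^T = 0.
Proof. by move/eqmxP => kerA; apply/eqP; rewrite -sub_kermx kerA. Qed.

Lemma self_dual_mx_rank m n (A : 'M[K]_(m, n)) :
  self_dual_mx A -> (\rank A).*2 = n.
Proof.
move/eqmxP => kerA; have := mxrank_ker A^T; rewrite kerA mxrank_tr => rkA.
by have := rank_leq_col A; lia.
Qed.

Lemma self_dual_mx_of_rank m n (A : 'M[K]_(m, n)) :
  A *m A^T = 0 -> (\rank A).*2 = n -> self_dual_mx A.
Proof.
move=> /eqP; rewrite -sub_kermx => sAker rkA.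
rewrite /self_dual_mx -(mxrank_leqif_sup sAker) mxrank_ker mxrank_tr; lia.
Qed.

Lemma det_block_swap d : \det (block_mx 0 1%:M 1%:M 0 : 'M[K]_(d + d)) = (-1) ^+ d.
Proof.
have -> : (block_mx 0 1%:M 1%:M 0 : 'M[K]_(d + d)) =
   block_mx 1%:M 0 1%:M 1%:M *m block_mx 1%:M (-1)%:M 0 1%:M
   *m block_mx 1%:M 0 1%:M 1%:M *m block_mx 1%:M 0 0 (-1)%:M.
  rewrite !mulmx_block !(mul1mx, mulmx1, mul0mx, mulmx0, addr0, add0r).
  by rewrite -scalar_mxM mulN1r -!raddfD /= subrr addNr addr0 raddf0 mul0mx opprK.
by rewrite !det_mulmx !det_lblock det_ublock !det1 !mul1r det_scalar.
Qed.

Lemma det_block0_tr d (X Z : 'M[K]_d) :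
  \det (block_mx 0 X X^T Z) = (-1) ^+ d * \det X ^+ 2.
Proof.
have -> : block_mx 0 X X^T Z = block_mx 0 1%:M 1%:M 0 *m block_mx X^T Z 0 X.
  by rewrite mulmx_block !(mul1mx, mul0mx, addr0, add0r).
by rewrite det_mulmx det_block_swap det_ublock det_tr expr2.
Qed.

Lemma self_orthogonal_sqr_sign d n (B : 'M[K]_(d, n)) : (d + d)%N = n ->
  row_free B -> B *m B^T = 0 -> exists x : K, x ^+ 2 = (-1) ^+ d.
Proof.
move=> dd; case: n / dd in B * => freeB BBt.
pose U := row_ebase B; pose L := col_ebase B.
have defB : B = L *m usubmx U.
  rewrite -{1}(mulmx_ebase B) (eqP freeB) pid_mx_row -/U -/L -mulmxA.
  by rewrite -{1}(vsubmxK U) mul_row_col mul1mx mul0mx addr0.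
have UUt : usubmx U *m (usubmx U)^T = 0.
  have unitL : L \in unitmx by apply: col_ebase_unit.
  move: BBt; rewrite defB trmx_mul mulmxA -(mulmxA L).
  move/(congr1 (mulmx (invmx L))); rewrite mulmx0 -mulmxA mulKmx //.
  by move/(congr1 (mulmx^~ (invmx L^T))); rewrite mul0mx mulmxK ?unitmx_tr.
set X := usubmx U *m (dsubmx U)^T.
have gramU : U *m U^T = block_mx 0 X X^T (dsubmx U *m (dsubmx U)^T).
  by rewrite -{1 2}(vsubmxK U) tr_col_mx mul_col_row UUt trmx_mul trmxK.
have := congr1 determinant gramU; rewrite det_block0_tr det_mulmx det_tr => detU.
have detU_neq0 : \det U != 0 by rewrite -unitfE -unitmxE row_ebase_unit.
have detX_neq0 : \det X != 0.
  apply: contra detU_neq0 => /eqP detX0.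
  have : \det U ^+ 2 == 0 by rewrite expr2 detU detX0 expr0n mulr0.
  by rewrite expf_eq0.
exists (\det U / \det X).
by rewrite expr_div_n expr2 detU mulfK // expf_neq0.
Qed.

Lemma self_dual_mx_sqr m n (A : 'M[K]_(m, n)) :
  self_dual_mx A -> exists x : K, x ^+ 2 = (-1) ^+ \rank A.
Proof.
move=> sdA; apply: (self_orthogonal_sqr_sign (B := row_base A)).
- by rewrite addnn self_dual_mx_rank.
- exact: row_base_free.
- have /submxP[C ->] : (row_base A <= A)%MS by rewrite eq_row_base.
  by rewrite trmx_mul mulmxA -(mulmxA C) (self_dual_mx_mul_tr sdA) mulmx0 mul0mx.
Qed.

Lemma self_dual_row_mx k (N : 'M[K]_k) :
  N *m N^T = - 1%:M -> self_dual_mx (row_mx 1%:M N).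
Proof.
move=> NNt; apply: self_dual_mx_of_rank.
  by rewrite tr_row_mx mul_row_col trmx1 mulmx1 NNt subrr.
suff -> : \rank (row_mx 1%:M N) = k by rewrite addnn.
apply/eqP; rewrite eqn_leq rank_leq_row /=.
have := mxrankM_maxl (row_mx 1%:M N) (col_mx 1%:M (0 : 'M_(k, k))).
by rewrite mul_row_col mulmx0 addr0 mulmx1 mxrank1.
Qed.

Lemma self_dual_row_scalar k (i : K) :
  i ^+ 2 = -1 -> self_dual_mx (row_mx 1%:M (i%:M : 'M_k)).
Proof.
by move=> i2; apply: self_dual_row_mx; rewrite tr_scalar_mx -scalar_mxM -expr2 i2 raddfN.
Qed.

Lemma self_dual_row_block k (a b : K) :
  a ^+ 2 + b ^+ 2 = -1 ->
  self_dual_mx (row_mx 1%:M (block_mx a%:M (- b)%:M b%:M a%:M : 'M_(k + k))).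
Proof.
move=> ab2; apply: self_dual_row_mx.
rewrite tr_block_mx !tr_scalar_mx mulmx_block -!scalar_mxM -!raddfD /=.
have -> : a * a + - b * - b = -1 by rewrite mulrNN -!expr2.
have -> : b * b + a * a = -1 by rewrite addrC -!expr2.
rewrite mulNr mulrN [b * a]mulrC !subrr raddf0 -raddfN.
exact/esym/scalar_mx_block.
Qed.
End SelfDualMatrix.

Section SelfDualFfunSet.
Variables (K : finFieldType) (T : finType) (S : {set {ffun T -> K}}).
Hypotheses (S0 : 0 \in S) (SD : forall u v, u \in S -> v \in S -> u + v \in S).
Hypothesis SZ : forall c u, u \in S -> [ffun t => c * u t] \in S.
Hypothesis S_self_dual :
  forall u, (u \in S) = [forall v in S, \sum_t u t * v t == 0].

Let ffun_of_rV (u : 'rV[K]_#|T|) : {ffun T -> K} := [ffun t => u 0 (enum_rank t)].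

Let span_S : 'M[K]_(#|S|, #|T|) :=
  \matrix_(i, j) (enum_val i : {ffun T -> K}) (enum_val j).

Let sub_span_S u : (u <= span_S)%MS = (ffun_of_rV u \in S).
Proof.
apply/idP/idP => [/submxP[z ->] | uS]; last first.
  have -> : u = row (enum_rank_in uS (ffun_of_rV u)) span_S.
    by apply/rowP => j; rewrite !mxE enum_rankK_in // ffunE enum_valK.
  exact: row_sub.
rewrite mulmx_sum_row; elim/big_ind: _ => // [|w w' wS w'S|i _].
- by rewrite (_ : ffun_of_rV 0 = 0) //; apply/ffunP => t; rewrite !ffunE mxE.
- rewrite (_ : ffun_of_rV _ = ffun_of_rV w + ffun_of_rV w'); first exact: SD.
  by apply/ffunP => t; rewrite !ffunE mxE.
rewrite (_ : ffun_of_rV _ = [ffun t => z 0 i * enum_val i t]).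
  exact/SZ/enum_valP.
by apply/ffunP => t; rewrite !ffunE !mxE enum_rankK.
Qed.

Let mul_span_S u : (u *m span_S^T == 0) = (ffun_of_rV u \in S).
Proof.
rewrite S_self_dual; apply/eqP/forall_inP => [uS v vS | uS].
  move/rowP: uS => /(_ (enum_rank_in vS v)); rewrite !mxE => uv.
  rewrite -[X in _ == X]uv (reindex _ (onW_bij _ (enum_val_bij T))).
  apply/eqP; apply: eq_bigr => j _.
  by rewrite !mxE enum_rankK_in // ffunE enum_valK.
apply/rowP => i; rewrite !mxE -[RHS](eqP (uS _ (enum_valP i))).
rewrite (reindex _ (onW_bij _ (enum_val_bij T))); apply: eq_bigr => j _.
by rewrite !mxE ffunE enum_valK.
Qed.

Lemma self_dual_ffun_set_sqr :
  exists2 d, #|T| = d.*2 & exists x : K, x ^+ 2 = (-1) ^+ d.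
Proof.
have sdS : self_dual_mx span_S.
  apply/andP; split; apply/row_subP => i.
    by rewrite sub_span_S -mul_span_S -sub_kermx row_sub.
  by rewrite sub_kermx mul_span_S -sub_span_S row_sub.
by exists (\rank span_S); [rewrite self_dual_mx_rank | apply: self_dual_mx_sqr].
Qed.

End SelfDualFfunSet.

Section QuasiGroupCodes.
Variables (K : finFieldType) (gT : finGroupType) (l : nat).
Implicit Types (v c : qvec K gT l) (C : {set qvec K gT l}).

Lemma qdualP C v : reflect (forall c, c \in C -> qform v c = 0) (v \in qdual C).
Proof. by rewrite inE; apply: (iffP forall_inP) => vC c /vC => [/eqP|->]. Qed.

Lemma qformDr v c c' : qform v (c + c') = qform v c + qform v c'.
Proof.
rewrite -big_split; apply: eq_bigr => j _.
by rewrite -big_split; apply: eq_bigr => g _; rewrite !ffunE mulrDr.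
Qed.

Definition coord_row v (g : gT) : 'rV[K]_l := \row_j v j g.

Lemma qform_coord_row v c :
  qform v c = \sum_g (coord_row v g *m (coord_row c g)^T) 0 0.
Proof.
rewrite /qform exchange_big; apply: eq_bigr => g _; rewrite mxE.
by apply: eq_bigr => j _; rewrite !mxE.
Qed.

Lemma coord_row_qrmul v r k :
  coord_row (qrmul v r) k = \sum_g r (g^-1 * k)%g *: coord_row v g.
Proof.
apply/rowP => j; rewrite summxE !mxE !ffunE.
by apply: eq_bigr => g _; rewrite !mxE mulrC.
Qed.

Definition delta_qvec (w : 'rV[K]_l) (g : gT) : qvec K gT l :=
  [ffun j => [ffun k => w 0 j * (k == g)%:R]].

Lemma coord_row_delta w g k : coord_row (delta_qvec w g) k = (k == g)%:R *: w.
Proof. by apply/rowP => j; rewrite !mxE !ffunE mulrC. Qed.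

Lemma qform_delta v w g : qform v (delta_qvec w g) = (coord_row v g *m w^T) 0 0.
Proof.
rewrite qform_coord_row (bigD1 g) //= big1 ?addr0 => [|k /negbTE kg].
  by rewrite coord_row_delta eqxx scale1r.
by rewrite coord_row_delta kg scale0r trmx0 mulmx0 mxE.
Qed.

Definition tensor_code m (M : 'M[K]_(m, l)) : {set qvec K gT l} :=
  [set v | [forall g, (coord_row v g <= M)%MS]].

Lemma tensor_code_quasiG m (M : 'M[K]_(m, l)) : is_quasiG_code (tensor_code M).
Proof.
split=> [|v c|v r]; rewrite !inE.
- apply/forallP => g; rewrite (_ : coord_row 0 g = 0) ?sub0mx //.
  by apply/rowP => j; rewrite !mxE !ffunE.
- move=> /forallP vM /forallP cM; apply/forallP => g.
  rewrite (_ : coord_row _ g = coord_row v g + coord_row c g) ?addmx_sub //.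
  by apply/rowP => j; rewrite !mxE !ffunE.
- move=> /forallP vM; apply/forallP => k; rewrite coord_row_qrmul.
  by apply: summx_sub => g _; apply: scalemx_sub.
Qed.

Lemma tensor_code_self_dual m (M : 'M[K]_(m, l)) :
  self_dual_mx M -> self_dual (tensor_code M).
Proof.
move=> sdM; apply/setP => v; apply/idP/idP.
  move=> vT; apply/qdualP => c; move: vT; rewrite !inE => /forallP vM /forallP cM.
  rewrite qform_coord_row big1 // => g _.
  by rewrite (self_dual_mx_orth sdM (vM g) (cM g)) mxE.
move/qdualP => vCperp; rewrite inE; apply/forallP => g.
rewrite self_dual_mx_sub //; apply/eqP/rowP => i; rewrite [RHS]mxE.
have deltaC : delta_qvec (row i M) g \in tensor_code M.
  by rewrite inE; apply/forallP => k; rewrite coord_row_delta scalemx_sub ?row_sub.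
rewrite -[RHS](vCperp _ deltaC) qform_delta !mxE.
by apply: eq_bigr => j _; rewrite !mxE.
Qed.

End QuasiGroupCodes.

Lemma sum_lmul_invariant (gT : finGroupType) (H : {group gT}) (R : nmodType)
    (x : gT -> R) :
  (forall h g, h \in H -> x (h * g)%g = x g) ->
  \sum_g x g = (\sum_(A in rcosets H [set: gT]) x (repr A)) *+ #|H|.
Proof.
move=> xH; rewrite (eq_bigl [in [set: gT]]) => [|g]; last by rewrite inE.
rewrite (set_partition_big _ (rcosets_partition (subsetT H))).
rewrite -sumrMnl; apply: eq_bigr => _ /rcosetsP[g0 _ ->].
rewrite -(card_rcoset H g0) -sumr_const; apply: eq_bigr => g.
have /rcosetP[h0 h0H ->] := mem_repr_rcoset H g0.
by case/rcosetP => h hH ->; rewrite !xH.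
Qed.

Section InvolutionCode.
Variables (K : finFieldType) (gT : finGroupType) (l : nat) (t : gT).
Hypotheses (pcharK2 : 2%N \in [pchar K]) (ord_t : #[t]%g = 2%N).

Definition invariant_code : {set qvec K gT l} :=
  [set v : qvec K gT l | [forall j, forall g, v j (t * g)%g == v j g]].

Lemma invariant_code_quasiG : is_quasiG_code invariant_code.
Proof.
split=> [|v c|v r]; rewrite !inE.
- by apply/forallP => j; apply/forallP => g; rewrite !ffunE.
- move=> /forallP vt /forallP ct; apply/forallP => j; apply/forallP => g.
  by rewrite !ffunE (eqP (forallP (vt j) g)) (eqP (forallP (ct j) g)).
- move=> /forallP vt; apply/forallP => j; apply/forallP => k.
  rewrite !ffunE (reindex_inj (mulgI t)) /=; apply/eqP/eq_bigr => g _.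
  by rewrite (eqP (forallP (vt j) g)) invMg -mulgA mulKg.
Qed.

Lemma sum_t_invariant_eq0 (x : gT -> K) :
  (forall g, x (t * g)%g = x g) -> \sum_g x g = 0.
Proof.
move=> xt; rewrite (@sum_lmul_invariant _ <[t]>) => [|_ g /cycleP[k ->]].
  by rewrite -orderE ord_t -mulr_natl (pcharf0 pcharK2) mul0r.
elim: k g => [|k IHk] g; first by rewrite mul1g.
by rewrite expgS -mulgA xt IHk.
Qed.

Lemma invariant_code_self_dual : self_dual invariant_code.
Proof.
apply/setP => v; apply/idP/idP.
  move=> vT; apply/qdualP => c; move: vT; rewrite !inE => /forallP vt /forallP ct.
  rewrite /qform big1 // => j _; apply: sum_t_invariant_eq0 => g.
  by rewrite (eqP (forallP (vt j) g)) (eqP (forallP (ct j) g)).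
move/qdualP => vperp; rewrite inE; apply/forallP => j; apply/forallP => g.
have tV : t^-1%g = t by rewrite invg_expg ord_t.
pose w : 'rV[K]_l := delta_mx 0 j.
have cT : delta_qvec w g + delta_qvec w (t * g) \in invariant_code.
  rewrite inE; apply/forallP => i; apply/forallP => k; rewrite !ffunE.
  by rewrite -{1}[g](mulKVg t) !(inj_eq (mulgI t)) tV addrC.
have := vperp _ cT; rewrite qformDr !qform_delta trmx_delta -!colE !mxE.
by move/eqP; rewrite addr_eq0 (oppr_pchar2 pcharK2) => /eqP ->.
Qed.

End InvolutionCode.

Section LeftCosetType.
Variables (gT : finGroupType) (H : {group gT}).

Definition lcoset_type := {A : {set gT} | A \in lcosets H [set: gT]}.

Lemma lcoset_in_lcosets g : (g *: H)%g \in lcosets H [set: gT].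
Proof. by rewrite -lcosetE imset_f ?inE. Qed.

Definition lcoset_of g : lcoset_type := exist _ (g *: H)%g (lcoset_in_lcosets g).

Lemma mem_lcoset_of g (A : lcoset_type) : (g \in val A) = (lcoset_of g == A).
Proof.
rewrite -val_eqE /=; case/imsetP: (valP A) => x _ ->; rewrite lcosetE.
by apply/idP/eqP => [/lcoset_eqP | <-] //; rewrite lcoset_refl.
Qed.

Lemma card_lcoset_type : #|{: lcoset_type}| = #|[set: gT] : H|%g.
Proof. by rewrite card_sig -card_lcosets. Qed.

Lemma sum_lcoset_of (R : nmodType) (F : lcoset_type -> R) :
  \sum_g F (lcoset_of g) = (\sum_A F A) *+ #|H|.
Proof.
rewrite (partition_big lcoset_of predT) //= -sumrMnl; apply: eq_bigr => A _.
rewrite (eq_bigr (fun=> F A)) => [|g /eqP <-] //; rewrite sumr_const.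
congr (_ *+ _); transitivity #|val A|; first by apply: eq_card => g; rewrite mem_lcoset_of.
by case/imsetP: (valP A) => x _ ->; rewrite lcosetE card_lcoset.
Qed.

End LeftCosetType.

Section CosetReduction.
Variables (K : finFieldType) (gT : finGroupType) (H : {group gT}) (l : nat).
Local Notation T := ('I_l * lcoset_type H)%type.

Definition lift_qvec (a : {ffun T -> K}) : qvec K gT l :=
  [ffun j => [ffun g => a (j, lcoset_of H g)]].

Definition coset_sum (v : qvec K gT l) : {ffun T -> K} :=
  [ffun t : T => \sum_(g in val t.2) v t.1 g].

Let sum_T (F : T -> K) : \sum_t F t = \sum_j \sum_A F (j, A).
Proof. by rewrite pair_bigA; apply: eq_bigr => -[]. Qed.

Lemma qform_lift a b :
  qform (lift_qvec a) (lift_qvec b) = #|H|%:R * \sum_t a t * b t.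
Proof.
rewrite sum_T mulr_sumr; apply: eq_bigr => j _.
under eq_bigr do rewrite !ffunE.
by rewrite (sum_lcoset_of (fun A => a (j, A) * b (j, A))) mulr_natl.
Qed.

Lemma qform_lift_l a v : qform (lift_qvec a) v = \sum_t a t * coset_sum v t.
Proof.
rewrite sum_T; apply: eq_bigr => j _.
rewrite (partition_big (lcoset_of H) predT) //=; apply: eq_bigr => A _.
rewrite [coset_sum _ _]ffunE /= mulr_sumr.
by apply: eq_big => [g|g /eqP <-]; rewrite ?mem_lcoset_of ?ffunE.
Qed.

Lemma lift_coset_sum v : lift_qvec (coset_sum v) = qrmul v [ffun g => (g \in H)%:R].
Proof.
apply/ffunP => j; apply/ffunP => k; rewrite !ffunE /= big_mkcond.
apply: eq_bigr => g _; rewrite ffunE mem_lcoset.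
by rewrite -groupV invMg invgK; case: (_ \in H); rewrite ?mulr1 ?mulr0.
Qed.

Lemma qrmul_scalar (v : qvec K gT l) (c : K) :
  qrmul v [ffun g => c * (g == 1)%g%:R] = [ffun j => [ffun k => c * v j k]].
Proof.
apply/ffunP => j; apply/ffunP => k; rewrite !ffunE (bigD1 k) //= big1 => [|g gk].
  by rewrite ffunE mulVg eqxx mulr1 mulrC addr0.
by rewrite ffunE -eq_mulVg1 (negbTE gk) mulr0 mulr0.
Qed.

Lemma self_dual_code_coset_sqr (C : {set qvec K gT l}) :
  is_quasiG_code C -> self_dual C -> (#|H|%:R : K) != 0 ->
  exists2 d, (l * #|[set: gT] : H|%g)%N = d.*2 & exists x : K, x ^+ 2 = (-1) ^+ d.
Proof.
move=> [C0 CD CM] sdC H_neq0.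
suff [d cardT sqr] : exists2 d, #|{: T}| = d.*2 & exists x : K, x ^+ 2 = (-1) ^+ d.
  by exists d => //; rewrite -cardT card_prod card_ord card_lcoset_type.
apply: (@self_dual_ffun_set_sqr K T [set a | lift_qvec a \in C]).
- rewrite inE (_ : lift_qvec 0 = 0) //.
  by apply/ffunP => j; apply/ffunP => g; rewrite !ffunE.
- move=> a b; rewrite !inE => aC bC.
  rewrite (_ : lift_qvec _ = lift_qvec a + lift_qvec b) ?CD //.
  by apply/ffunP => j; apply/ffunP => g; rewrite !ffunE.
- move=> c a; rewrite !inE => /(CM _ [ffun g => c * (g == 1)%g%:R]).
  rewrite qrmul_scalar; congr (_ \in C).
  by apply/ffunP => j; apply/ffunP => g; rewrite !ffunE.
- move=> a; rewrite inE; apply/idP/forall_inP => [aC b | aperp].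
    rewrite inE sdC => /qdualP /(_ _ aC).
    rewrite qform_lift (eq_bigr _ (fun t _ => mulrC (b t) (a t))) => /eqP.
    by rewrite mulf_eq0 (negbTE H_neq0).
  rewrite sdC; apply/qdualP => c cC; rewrite qform_lift_l; apply/eqP/aperp.
  by rewrite inE lift_coset_sum CM.
Qed.

End CosetReduction.

Lemma dvdn_pow2_mul_odd k l m : odd m -> (2 ^ k %| l * m)%N = (2 ^ k %| l)%N.
Proof. by move=> odd_m; rewrite Gauss_dvdl // coprimeXl // coprime2n. Qed.

Section Characterization.
Variables (K : finFieldType) (gT : finGroupType).

Definition has_self_dual_code l :=
  exists C : {set qvec K gT l}, is_quasiG_code C /\ self_dual C.

Lemma has_self_dual_code_tensor l m (M : 'M[K]_(m, l)) :
  self_dual_mx M -> has_self_dual_code l.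
Proof.
move=> sdM; exists (tensor_code gT M).
by split; [apply: tensor_code_quasiG | apply: tensor_code_self_dual].
Qed.

Lemma has_self_dual_code_sqrN1 l (i : K) :
  i ^+ 2 = -1 -> (2 %| l)%N -> has_self_dual_code l.
Proof.
move=> i2 /dvdnP[k ->]; rewrite muln2 -addnn.
exact: has_self_dual_code_tensor (self_dual_row_scalar k i2).
Qed.

Lemma has_self_dual_code_sum_sqr l (a b : K) :
  a ^+ 2 + b ^+ 2 = -1 -> (4 %| l)%N -> has_self_dual_code l.
Proof.
move=> ab2 /dvdnP[k ->]; rewrite (_ : (k * 4 = (k + k) + (k + k))%N); last by lia.
exact: has_self_dual_code_tensor (self_dual_row_block k ab2).
Qed.

Lemma has_self_dual_code_involution l :
  2%N \in [pchar K] -> (2 %| #|gT|)%N -> has_self_dual_code l.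
Proof.
move=> pcharK2; rewrite -cardsT => /(Cauchy (isT : prime 2))[t _ ord_t].
exists (invariant_code K l t); split; first exact: invariant_code_quasiG.
exact: invariant_code_self_dual.
Qed.

Lemma has_self_dual_code_odd_index l :
  has_self_dual_code l -> (2%:R : K) != 0 \/ odd #|gT| ->
  exists m d, [/\ odd m, (l * m)%N = d.*2 & exists x : K, x ^+ 2 = (-1) ^+ d].
Proof.
case=> C [qC sdC] [two_neq0 | oddG].
  have [H /and3P[_ pH p'idx]] := Sylow_exists 2 [set: gT].
  have [|d ld sqr] := self_dual_code_coset_sqr (H := H) qC sdC.
    by rewrite (card_pgroup pH) natrX expf_neq0.
  exists #|[set: gT] : H|%g, d; split => //.
  by move: p'idx; rewrite p'natE // dvdn2 negbK.
have [|d ld sqr] := self_dual_code_coset_sqr (H := 1%G) qC sdC.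
  by rewrite cards1 oner_neq0.
by exists #|gT|, d; rewrite -ld indexg1 cardsT.
Qed.

Lemma has_self_dual_code_odd_card l :
  has_self_dual_code l -> odd #|K| ->
  (2 %| l)%N /\ ((#|K| %% 4 = 3)%N -> (4 %| l)%N).
Proof.
move=> code oddK; have two_neq0 : (2%:R : K) != 0 by rewrite -odd_card_finField.
have [m [d [odd_m lm sqr]]] := has_self_dual_code_odd_index code (or_introl two_neq0).
split=> [|K3]; first by rewrite -(dvdn_pow2_mul_odd 1 l odd_m) lm dvdn2 odd_double.
have d_even : ~~ odd d.
  case: sqr => x; rewrite -signr_odd; case: (odd d) => // x2.
  by have := sqr_neqN1 K3 x; rewrite x2 eqxx.
rewrite -(dvdn_pow2_mul_odd 2 l odd_m) lm -muln2 (_ : 2 ^ 2 = 2 * 2)%N //.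
by rewrite dvdn_pmul2r // dvdn2.
Qed.

Lemma has_self_dual_code_odd_group l :
  has_self_dual_code l -> odd #|gT| -> (2 %| l)%N.
Proof.
move=> code oddG.
have [m [d [odd_m lm _]]] := has_self_dual_code_odd_index code (or_intror oddG).
by rewrite -(dvdn_pow2_mul_odd 1 l odd_m) lm dvdn2 odd_double.
Qed.

End Characterization.

Theorem theorem5p1 (K : finFieldType) (gT : finGroupType) (l : nat) :
  (0 < l)%N ->
  (exists C : {set qvec K gT l}, is_quasiG_code C /\ self_dual C) <->
  [\/ (#|K| %% 4 == 1)%N && (2 %| l)%N,
      (#|K| %% 4 == 3)%N && (4 %| l)%N
    | ~~ odd #|K| && ((2 %| l)%N || (2 %| #|gT|)%N)].
Proof.
move=> _; split => [code | ].
  have [oddK | evenK] := boolP (odd #|K|).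
    have [l2 l4] := has_self_dual_code_odd_card code oddK.
    have /orP[/eqP K1 | /eqP K3] : (#|K| %% 4 == 1)%N || (#|K| %% 4 == 3)%N.
      by have := modn2 #|K|; rewrite oddK; lia.
      by apply: Or31; rewrite K1 l2.
    by apply: Or32; rewrite K3 l4.
  apply/Or33/andP; split => //; apply/orP.
  have [oddG | evenG] := boolP (odd #|gT|); last by right; rewrite dvdn2.
  by left; apply: has_self_dual_code_odd_group code oddG.
case=> [/andP[/eqP K1 l2] | /andP[/eqP K3 l4] | /andP[evenK l2G]].
- have [i i2] := sqrN1_exists K1; exact: has_self_dual_code_sqrN1 i2 l2.
- have [a [b ab2]] := sum_sqr_eqN1 K; exact: has_self_dual_code_sum_sqr ab2 l4.
have pcharK2 : 2%N \in [pchar K].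
  by rewrite inE /= -[_ == 0]negbK -odd_card_finField evenK.
case/orP: l2G => [l2 | G2]; last exact: has_self_dual_code_involution.
by apply: (@has_self_dual_code_sqrN1 _ _ _ 1) l2; rewrite expr1n (oppr_pchar2 pcharK2).
Qed.
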